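(* Let $n\ge 4$, let $H$ be a Hamiltonian cycle of the complete graph $K_n$ on $V=\{1,\dots,n\}$, and let $k\in\{2,3,\dots,n\}$. Let $H'$ be any $k$-exchange of $H$. Then one application of the vertex-based random solution generation with the matrix $\Pi^H$ outputs $H'$ with probability $\Omega(1/n^{2k-1})$.
   Context: For a Hamiltonian cycle $H$, $\Pi^H=(\pi_{i,j})$ is the symmetric $n\times n$ matrix with $\pi_{i,i}=0$, $\pi_{i,j}=1-\frac1n$ if $\{i,j\}\in H$ and $\pi_{i,j}=\frac{1}{n(n-2)}$ otherwise. (In the algorithm studied, $\Pi^H$ is the sampling matrix in iteration $t+1$ when $H$ is the best solution sampled in iteration $t$.) Vertex-based generation from $\Pi$: pick a start vertex uniformly at random; while unvisited vertices remain, from the current vertex $v$ move to an unvisited vertex $v'$ chosen with probability $\pi_{v,v'}/\sum_{j\text{ unvisited}}\pi_{v,j}$; output the Hamiltonian cycle visiting vertices in this order. A $k$-exchange of $H$ is a Hamiltonian cycle obtained from $H$ by removing $k$ of its edges and adding $k$ edges not in $H$. *)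

From HB Require Import structures.
From mathcomp Require Import all_boot all_order all_algebra.
From mathcomp Require Import perm.
Set Implicit Arguments. Unset Strict Implicit. Unset Printing Implicit Defensive.
Import Order.TTheory GRing.Theory Num.Theory.
Local Open Scope ring_scope.

(* Vertices of K_n are 'I_n; an edge of K_n is a 2-element set {set 'I_n}. *)

Definition cyc_edges (n : nat) (p : {perm 'I_n}) : {set {set 'I_n}} :=
  [set [set p i; p (ordS i)] | i : 'I_n].

Definition ham_cycle (n : nat) (H : {set {set 'I_n}}) : Prop :=
  exists p : {perm 'I_n}, H = cyc_edges p.

Definition k_exchange (n : nat) (H H' : {set {set 'I_n}}) (k : nat) : Prop :=
  ham_cycle H' /\
  exists A B : {set {set 'I_n}},
    [/\ A \subset H, #|A| = k, [disjoint B & H], #|B| = k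
      & H' = (H :\: A) :|: B].

Definition PiH (R : fieldType) (n : nat) (H : {set {set 'I_n}}) (i j : 'I_n) : R :=
  if i == j then 0
  else if [set i; j] \in H then 1 - 1 / n%:R
  else 1 / (n%:R * (n - 2)%:R).

(* Probability that vertex-based generation from Pi visits the vertices in
   the order p 0, p 1, ..., p (n-1): start vertex uniform (1/n), then at step i
   (current vertex p i, visited set {p 0,...,p i}) move to p (i+1) with probability
   Pi(p i, p (i+1)) / sum_{j unvisited} Pi(p i, j). *)
Definition order_prob (R : fieldType) (n : nat) (Pi : 'I_n -> 'I_n -> R)
    (p : {perm 'I_n}) : R :=
  (1 / n%:R) *
  \prod_(i : 'I_n | (i.+1 < n)%N)
     (Pi (p i) (p (ordS i)) /
      \sum_(j : 'I_n | j \notin [set p m | m : 'I_n & (m <= i)%N]) Pi (p i) j).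

Definition gen_prob (R : fieldType) (n : nat) (Pi : 'I_n -> 'I_n -> R)
    (H' : {set {set 'I_n}}) : R :=
  \sum_(p : {perm 'I_n} | cyc_edges p == H') order_prob Pi p.

From HB Require Import structures.
From mathcomp Require Import all_boot all_order all_algebra.
From mathcomp Require Import perm.
From mathcomp Require Import zify ring lra.
Set Implicit Arguments. Unset Strict Implicit. Unset Printing Implicit Defensive.
Import Order.TTheory GRing.Theory Num.Theory.
Local Open Scope ring_scope.

(* Write H' = (H \ A) + B with |B| = k and list its vertices in an order q whose
   closing edge q(n-1) q(0) lies in B; since generation never pays for the closing
   edge, at most k - 1 of the n - 1 sampled edges are outside H.  Let
   a = 1 - 1/n and b = 1/(n(n-2)) be the two off-diagonal entries of Pi^H.  Over the
   unvisited vertices a row of Pi^H sums to at most b(n-1) + 2(a-b) <= 2, and to at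
   most b(n-1) + (a-b) = 1 once one of the two H-neighbours of the current vertex
   has been visited, i.e. when it was entered along an edge of H.  So each step
   costs a factor a, times 1/2 if the current vertex was not entered along H (at
   most k such steps), times b/2 if the edge taken is not in H (at most k - 1
   steps).  With a^n >= 1/8 this gives (1/n) (1/8) 2^-k (b/2)^(k-1), which is of
   order n^-(2k-1). *)

Section CyclicOrdinals.

Variable n : nat.
Implicit Types i j : 'I_n.

Lemma val_ordS i : ordS i = (if i.+1 < n then i.+1 else 0)%N :> nat.
Proof.
rewrite /ordS /=; case: ltnP => [lt_in|n_le]; first exact: modn_small.
by rewrite (_ : i.+1 = n) ?modnn //; have := ltn_ord i; lia.
Qed.

Lemma val_ord_pred i : (0 < i)%N -> ord_pred i = i.-1 :> nat.
Proof.
move=> i_gt0; have := congr1 (@nat_of_ord n) (ord_predK i); rewrite val_ordS.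
by case: ifP => _ /=; lia.
Qed.

Lemma val_iter_ordS i m : iter m (@ordS n) i = ((i + m) %% n)%N :> nat.
Proof.
elim: m => [|m IHm] /=; first by rewrite addn0 modn_small.
by rewrite /ordS /= IHm addnS -addn1 modnDml addn1.
Qed.

Lemma ordS_neq i : (2 <= n)%N -> ordS i != i.
Proof.
move=> n_ge2; apply/eqP => /(congr1 (@nat_of_ord n)).
by rewrite val_ordS; case: ifP => /=; lia.
Qed.

Lemma ordSS_neq i : (3 <= n)%N -> ordS (ordS i) != i.
Proof.
move=> n_ge3; apply/eqP => /(congr1 (@nat_of_ord n)).
by rewrite !val_ordS; have := ltn_ord i; case: ifP => /=; case: ifP => /=; lia.
Qed.

End CyclicOrdinals.

Definition cyc_edge n (p : {perm 'I_n}) (i : 'I_n) : {set 'I_n} := [set p i; p (ordS i)].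

Section CycleEdges.

Variables (n : nat) (p : {perm 'I_n}).

Lemma mem_cyc_edges i : cyc_edge p i \in cyc_edges p.
Proof. exact: imset_f. Qed.

Lemma cyc_edge_inj : (3 <= n)%N -> injective (cyc_edge p).
Proof.
move=> n_ge3 i j eq_ij.
have : p i \in cyc_edge p j by rewrite -eq_ij set21.
have : p (ordS i) \in cyc_edge p j by rewrite -eq_ij set22.
move=> /set2P[] /perm_inj eSi /set2P[] /perm_inj ei //; last exact: ordS_inj.
by move: (ordSS_neq j n_ge3); rewrite -ei eSi eqxx.
Qed.

Lemma cyc_edges_nbr x j : [set x; j] \in cyc_edges p -> j != x ->
  j \in [set p (ordS ((p^-1)%g x)); p (ord_pred ((p^-1)%g x))].
Proof.
case/imsetP=> m _ exj.
have : x \in [set p m; p (ordS m)] by rewrite -exj set21.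
have : j \in [set p m; p (ordS m)] by rewrite -exj set22.
case/set2P=> -> /set2P[] ->; rewrite ?eqxx // => _.
  by rewrite permK ordSK set22.
by rewrite permK set21.
Qed.

Lemma cyc_edges_rotate j : exists q : {perm 'I_n},
  cyc_edges q = cyc_edges p /\ forall i : 'I_n, i.+1 = n -> cyc_edge q i = cyc_edge p j.
Proof.
pose s : {perm 'I_n} := (perm (@ordS_inj n) ^+ j.+1)%g.
have sE x : s x = iter j.+1 (@ordS n) x.
  by rewrite /s permX; apply: eq_iter => y; rewrite permE.
have edge_s i : cyc_edge (s * p)%g i = cyc_edge p (s i).
  by rewrite /cyc_edge !permM !sE -iterSr iterS.
exists (s * p)%g; split.
  apply/setP=> e; apply/imsetP/imsetP=> -[i _ ->].
    by exists (s i); last exact: edge_s.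
  by exists ((s^-1)%g i); last by rewrite [RHS]edge_s permKV.
move=> i last_i; rewrite edge_s; congr cyc_edge; apply: val_inj.
by rewrite /= sE val_iter_ordS addnS -addSn last_i modnDl modn_small.
Qed.

End CycleEdges.

(* Step i starts at a vertex that was not entered along an edge of H. *)
Definition reached_off n (H : {set {set 'I_n}}) (q : {perm 'I_n}) (i : 'I_n) : bool :=
  (i == 0 :> nat) || (cyc_edge q (ord_pred i) \notin H).

Section OffSteps.

Variables (n : nat) (q : {perm 'I_n}) (H B : {set {set 'I_n}}).
Hypothesis n_ge3 : (3 <= n)%N.
Hypothesis off_in_B : forall i, cyc_edge q i \notin H -> cyc_edge q i \in B.
Hypothesis last_in_B : forall i : 'I_n, i.+1 = n -> cyc_edge q i \in B.

Let n_gt0 : (0 < n)%N. Proof. exact: leq_trans n_ge3. Qed.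
Let last_lt : (n.-1 < n)%N. Proof. by rewrite ltn_predL. Qed.
Let i_last : 'I_n := Ordinal last_lt.
Let last_B : cyc_edge q i_last \in B. Proof. by apply: last_in_B; rewrite /= prednK. Qed.
Let q_edge_inj : injective (cyc_edge q). Proof. exact: cyc_edge_inj. Qed.

Lemma card_off_steps :
  (#|[set i : 'I_n | (i.+1 < n)%N && (cyc_edge q i \notin H)]| <= #|B|.-1)%N.
Proof.
rewrite -(card_imset _ q_edge_inj) (cardsD1 (cyc_edge q i_last) B) last_B /=.
apply/subset_leq_card/subsetP => _ /imsetP[i /setIdP[i_lt off_i] ->].
rewrite in_setD1 off_in_B // andbT (inj_eq q_edge_inj).
by apply: contraTneq i_lt => ->; rewrite /= prednK ?ltnn.
Qed.

Lemma card_reached_off_steps :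
  (#|[set i : 'I_n | (i.+1 < n)%N && reached_off H q i]| <= #|B|)%N.
Proof.
have B_gt0 : (0 < #|B|)%N by apply/card_gt0P; exists (cyc_edge q i_last).
pose off := [set i : 'I_n | (i.+1 < n)%N && (cyc_edge q i \notin H)].
have sub : [set i : 'I_n | (i.+1 < n)%N && reached_off H q i]
             \subset Ordinal n_gt0 |: (@ordS n @: off).
  apply/subsetP=> i /setIdP[i_lt]; rewrite /reached_off => reached; apply/setU1P.
  have [i0 | i_gt0] := posnP i; [by left; apply: val_inj | right].
  move: reached; rewrite eqn0Ngt i_gt0 /= => off_pred.
  apply/imsetP; exists (ord_pred i); last by rewrite ord_predK.
  by rewrite inE off_pred val_ord_pred // prednK // ltnW.
apply: leq_trans (subset_leq_card sub) _.
rewrite cardsU1 -(prednK B_gt0) -add1n leq_add ?leq_b1 //.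
exact: leq_trans (leq_imset_card _ _) card_off_steps.
Qed.

End OffSteps.

Lemma prod_if_const (R : comPzSemiRingType) (T : finType) (P Q : pred T) (c : R) :
  \prod_(i | P i) (if Q i then c else 1) = c ^+ #|[set i | P i && Q i]|.
Proof. by rewrite -big_mkcondr -prodr_const; apply: eq_bigl => i; rewrite inE. Qed.

Lemma bernoulli (R : realDomainType) (y : R) m : -1 <= y -> 1 + m%:R * y <= (1 + y) ^+ m.
Proof.
move=> y_ge; elim: m => [|m IHm]; first by rewrite mul0r addr0 expr0.
have y1_ge0 : 0 <= 1 + y by rewrite -lerBlDl sub0r.
have := ler_wpM2r y1_ge0 IHm.
have : 0 <= m%:R * (y * y) by rewrite mulr_ge0 // -expr2 sqr_ge0.
rewrite exprSr -natr1; nra.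
Qed.

Lemma one_sub_inv_expn_ge (R : realFieldType) n : (2 <= n)%N -> 1 / 8 <= (1 - 1 / n%:R) ^+ n :> R.
Proof.
move=> n_ge2; have n_ge2R : 2 <= n%:R :> R by rewrite (ler_nat R 2).
set a := 1 - 1 / n%:R; set s := n./2.
have [a_ge a_le1] : 1 / 2 <= a /\ a <= 1.
  by rewrite /a; split; [rewrite lerBrDr -lerBrDl ler_pdivrMr | rewrite gerBl divr_ge0]; lra.
have s_le : s%:R * 2 <= n%:R :> R by rewrite -natrM ler_nat muln2 -geq_half_double.
(* Bernoulli for half the exponent, then square. *)
have as_ge : 1 / 2 <= a ^+ s.
  apply: le_trans (bernoulli s (_ : -1 <= - (1 / n%:R))); last by rewrite lerN2 ler_pdivrMr; lra.
  have : s%:R * (1 / n%:R) <= 1 / 2 :> R by rewrite mulrA mulr1 ler_pdivrMr; lra.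
  by rewrite mulrN; lra.
apply: le_trans (_ : a ^+ (s.*2.+1) <= a ^+ n); last first.
  by apply: ler_wiXn2l; [lra | lra | rewrite -leq_half_double].
rewrite exprS -muln2 exprM.
have : 1 / 4 <= (a ^+ s) ^+ 2 by rewrite expr2; nra.
nra.
Qed.

Section Generation.

Variables (R : realFieldType) (n : nat) (Pi : 'I_n -> 'I_n -> R).
Hypothesis Pi_ge0 : forall i j, 0 <= Pi i j.

Lemma order_prob_ge0 p : 0 <= order_prob Pi p.
Proof.
rewrite mulr_ge0 ?divr_ge0 ?prodr_ge0 // => i _.
by rewrite divr_ge0 ?sumr_ge0.
Qed.

Lemma order_prob_le_gen_prob p : order_prob Pi p <= gen_prob Pi (cyc_edges p).
Proof.
rewrite /gen_prob (bigD1 p) //= lerDl sumr_ge0 // => p' _.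
exact: order_prob_ge0.
Qed.

End Generation.

Section SamplingMatrix.

Variables (R : realFieldType) (n : nat).
Local Notation a := (1 - 1 / n%:R : R).
Local Notation b := (1 / (n%:R * (n - 2)%:R) : R).

Lemma PiH_ge0 (H : {set {set 'I_n}}) i j : 0 <= PiH R H i j.
Proof.
have inv_le1 : 1 / n%:R <= 1 :> R.
  by rewrite mul1r; case: n => [|m]; rewrite ?invr0 // invf_le1 ?ler1n ?ltr0Sn.
rewrite /PiH; case: eqP => // _; case: ifP => _; first by rewrite subr_ge0.
by rewrite divr_ge0 ?mulr_ge0.
Qed.

Lemma sum_PiH_unvisited (H : {set {set 'I_n}}) (V : {set 'I_n}) x : x \in V ->
  \sum_(j | j \notin V) PiH R H x j =
  b *+ #|~: V| + (a - b) *+ #|[set j | (j \notin V) && ([set x; j] \in H)]|.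
Proof.
move=> xV.
have PiH_split j : j \notin V -> PiH R H x j = b + (if [set x; j] \in H then a - b else 0).
  by move=> jV; rewrite /PiH ifN ?(contraNneq _ jV) //; [case: ifP => _; ring | move=> <-].
rewrite (eq_bigr _ PiH_split) big_split /= -big_mkcondr !sumr_const.
by congr (_ *+ _ + _ *+ _); apply: eq_card => j; rewrite !inE.
Qed.

End SamplingMatrix.

Section CycleMatrix.

Variables (R : realFieldType) (n : nat) (p0 : {perm 'I_n}).
Hypothesis n_ge4 : (4 <= n)%N.
Local Notation a := (1 - 1 / n%:R : R).
Local Notation b := (1 / (n%:R * (n - 2)%:R) : R).
Local Notation H := (cyc_edges p0).
Local Notation unvisited_nbrs V x := [set j | (j \notin V) && ([set x; j] \in H)].
Local Notation S V x := (\sum_(j | j \notin V) PiH R H x j).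

Let n_ge4R : 4 <= n%:R :> R. Proof. by rewrite (ler_nat R 4). Qed.
Let natr_subn2 : (n - 2)%:R = n%:R - 2 :> R.
Proof. by rewrite natrB // (leq_trans _ n_ge4). Qed.
Let inv_n_ge0 : 0 <= 1 / n%:R :> R. Proof. by rewrite divr_ge0. Qed.
Let inv_n_le : 1 / n%:R <= 1 / 4 :> R.
Proof. by move: n_ge4R => ?; rewrite ler_pdivrMr; lra. Qed.
Let a_ge0 : 0 <= a. Proof. by move: inv_n_le => ?; lra. Qed.
Let a_le1 : a <= 1. Proof. by move: inv_n_ge0 => ?; lra. Qed.
Let b_gt0 : 0 < b.
Proof. by move: n_ge4R => ?; rewrite natr_subn2 divr_gt0 // mulr_gt0 //; lra. Qed.
Let b_le : b <= 1 / 8.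
Proof. by move: n_ge4R => ?; rewrite natr_subn2 ler_pdivrMr; nra. Qed.
Let b_ge0 : 0 <= b. Proof. exact: ltW. Qed.
Let ab_ge0 : 0 <= a - b. Proof. by move: inv_n_le b_le => ? ?; lra. Qed.
Let weights_sum : b * (n%:R - 1) + (a - b) = 1.
Proof. by move: n_ge4R => ?; rewrite natr_subn2; field; apply/andP; split; apply/eqP; lra. Qed.

Let nbrs x := [set p0 (ordS ((p0^-1)%g x)); p0 (ord_pred ((p0^-1)%g x))].

Let unvisited_nbrs_sub (V : {set 'I_n}) x :
  x \in V -> unvisited_nbrs V x \subset nbrs x :\: V.
Proof.
move=> xV; apply/subsetP=> j /setIdP[jV xjH].
by rewrite inE jV cyc_edges_nbr // (contraNneq _ jV) // => ->.
Qed.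

Lemma card_unvisited_nbrs (V : {set 'I_n}) x : x \in V -> (#|unvisited_nbrs V x| <= 2)%N.
Proof.
move=> xV; apply: leq_trans (subset_leq_card (unvisited_nbrs_sub xV)) _.
by apply: leq_trans (subset_leq_card (subsetDl _ _)) _; rewrite cards2 ltnS leq_b1.
Qed.

Lemma card_unvisited_nbrs_visited (V : {set 'I_n}) x z :
  x \in V -> z \in V -> z != x -> [set x; z] \in H -> (#|unvisited_nbrs V x| <= 1)%N.
Proof.
move=> xV zV zx xzH; apply: leq_trans (subset_leq_card (unvisited_nbrs_sub xV)) _.
have z_nbr : z \in nbrs x := cyc_edges_nbr xzH zx.
have sub : nbrs x :\: V \subset nbrs x :\ z by rewrite setDS // sub1set.
apply: leq_trans (subset_leq_card sub) _.
by have := cardsD1 z (nbrs x); rewrite z_nbr cards2 add1n => -[<-]; apply: leq_b1.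
Qed.

Lemma sum_PiH_unvisited_le (V : {set 'I_n}) x m :
  x \in V -> (#|unvisited_nbrs V x| <= m.+1)%N -> S V x <= 1 + (a - b) *+ m.
Proof.
move=> xV card_nbrs; rewrite sum_PiH_unvisited //.
have card_unvisited : #|~: V|%:R <= n%:R - 1 :> R.
  have V_gt0 : (0 < #|V|)%N by apply/card_gt0P; exists x.
  by have := cardsC V; rewrite card_ord lerBrDr natr1 ler_nat; lia.
have card_nbrsR : #|unvisited_nbrs V x|%:R <= m%:R + 1 :> R by rewrite natr1 ler_nat.
rewrite -[b *+ _]mulr_natr -[(a - b) *+ _]mulr_natr.
apply: le_trans (lerD (ler_wpM2l b_ge0 card_unvisited) (ler_wpM2l ab_ge0 card_nbrsR)) _.
by rewrite [(a - b) * _]mulrDr mulr1 addrCA weights_sum addrC mulr_natr.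
Qed.

(* The entry is a on H-edges and b otherwise, while the row sum over the unvisited
   vertices is at most 2, and at most 1 when an H-neighbour of x is visited. *)
Lemma PiH_step_ge (V : {set 'I_n}) x y (fresh : bool) :
  x \in V -> y \notin V ->
  (~~ fresh -> exists2 z, z \in V & (z != x) && ([set x; z] \in H)) ->
  a * (if fresh then 1 / 2 else 1) * (if [set x; y] \in H then 1 else b / 2)
    <= PiH R H x y / S V x.
Proof.
move=> xV yV visited_nbr.
have xy : x != y by apply: contraNneq yV => <-.
have Pxy : PiH R H x y = if [set x; y] \in H then a else b by rewrite /PiH (negbTE xy).
have S_ge : PiH R H x y <= S V x.
  by rewrite (bigD1 y) //= lerDl sumr_ge0 // => j _; apply: PiH_ge0.
have S_gt0 : 0 < S V x.
  by apply: lt_le_trans S_ge; rewrite Pxy; case: ifP => _ //; move: inv_n_le => ?; lra.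
have S_le (m : nat) : (#|unvisited_nbrs V x| <= m.+1)%N -> S V x <= 1 + (a - b) *+ m.
  exact: sum_PiH_unvisited_le.
have cS_le1 : (if fresh then 1 / 2 else 1) * S V x <= 1.
  case: fresh visited_nbr => [_ | /(_ isT) [z zV /andP[zx xzH]]].
    have := S_le 1%N (card_unvisited_nbrs xV); rewrite mulr1n.
    by move: a_le1 b_ge0 => ? ?; lra.
  have := S_le 0%N (card_unvisited_nbrs_visited xV zV zx xzH).
  by rewrite mulr0n addr0 mul1r.
set c : R := if fresh then 1 / 2 else 1 in cS_le1 *.
have cS_ge0 : 0 <= c * S V x.
  by rewrite mulr_ge0 ?ltW // /c; case: (fresh) => //; lra.
have acS_le1 : a * (c * S V x) <= 1 by apply: mulr_ile1.
rewrite ler_pdivlMr // Pxy; case: ifP => _.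
  by rewrite mulr1 -mulrA ler_piMr.
rewrite (_ : _ * S V x = b / 2 * (a * (c * S V x))); last by ring.
by apply: le_trans (ler_piMr _ acS_le1) _; move: b_ge0 => ?; lra.
Qed.

Local Notation visited q i := [set q m | m : 'I_n & (m <= i)%N].

Lemma PiH_order_step_ge (q : {perm 'I_n}) (i : 'I_n) : (i.+1 < n)%N ->
  a * (if reached_off H q i then 1 / 2 else 1) * (if cyc_edge q i \notin H then b / 2 else 1)
    <= PiH R H (q i) (q (ordS i)) / S (visited q i) (q i).
Proof.
move=> i_lt; rewrite if_neg; apply: PiH_step_ge.
- by apply: imset_f; rewrite inE.
- apply/imsetP=> -[m]; rewrite inE => m_le /perm_inj eq_m.
  by move: m_le; rewrite -eq_m val_ordS i_lt ltnn.
rewrite /reached_off negb_or negbK -lt0n => /andP[i_gt0 pred_edge].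
exists (q (ord_pred i)); first by apply: imset_f; rewrite inE val_ord_pred ?leq_pred.
rewrite (inj_eq perm_inj); apply/andP; split.
  by rewrite -[X in _ != X](ord_predK i) eq_sym ordS_neq // (leq_trans _ n_ge4).
by rewrite setUC; move: pred_edge; rewrite /cyc_edge ord_predK.
Qed.

Lemma order_prob_PiH_ge (q : {perm 'I_n}) :
  1 / n%:R * (a ^+ n * (1 / 2) ^+ #|[set i : 'I_n | (i.+1 < n)%N && reached_off H q i]|
                     * (b / 2) ^+ #|[set i : 'I_n | (i.+1 < n)%N && (cyc_edge q i \notin H)]|)
    <= order_prob (PiH R H) q.
Proof.
pose step (i : 'I_n) := a * (if reached_off H q i then 1 / 2 else 1)
                 * (if cyc_edge q i \notin H then b / 2 else 1).
have step_ge (i : 'I_n) : (i.+1 < n)%N ->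
    0 <= step i <= PiH R H (q i) (q (ordS i)) / S (visited q i) (q i).
  move=> i_lt; rewrite PiH_order_step_ge // andbT.
  by move: b_ge0 => ?; rewrite !mulr_ge0 //; case: ifP => _; lra.
rewrite /order_prob; apply: (ler_wpM2l inv_n_ge0).
apply: (le_trans (y := \prod_(i : 'I_n | (i.+1 < n)%N) step i)); last exact: ler_prod step_ge.
rewrite !big_split /= !prod_if_const prodr_const.
apply: ler_wpM2r; first by rewrite exprn_ge0 // (divr_ge0 b_ge0).
apply: ler_wpM2r; first by rewrite exprn_ge0 //; lra.
by apply: ler_wiXn2l => //; apply: leq_trans (max_card _) _; rewrite card_ord.
Qed.

Lemma order_prob_PiH_ge_new_edges (q : {perm 'I_n}) (B : {set {set 'I_n}}) :
  (forall i, cyc_edge q i \notin H -> cyc_edge q i \in B) ->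
  (forall i : 'I_n, i.+1 = n -> cyc_edge q i \in B) ->
  1 / n%:R * (1 / 8 * (1 / 2) ^+ #|B| * (b / 2) ^+ #|B|.-1) <= order_prob (PiH R H) q.
Proof.
move=> off_in_B last_in_B; apply: le_trans (order_prob_PiH_ge q).
have n_ge3 : (3 <= n)%N by apply: ltnW.
have half_ge0 : 0 <= 1 / 2 :> R by lra.
have hb_ge0 : 0 <= b / 2 by rewrite divr_ge0.
apply: (ler_wpM2l inv_n_ge0); apply: ler_pM; rewrite ?mulr_ge0 ?exprn_ge0 ?invr_ge0 ?ler0n //.
- apply: ler_pM; [lra | exact: exprn_ge0 | exact: one_sub_inv_expn_ge (ltnW n_ge3) |].
  apply: ler_wiXn2l => //; first lra.
  exact: card_reached_off_steps n_ge3 off_in_B last_in_B.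
- apply: ler_wiXn2l => //; first by move: b_le => ?; lra.
  exact: card_off_steps n_ge3 off_in_B last_in_B.
Qed.

Lemma inv_pow_le_PiH_weights k : (0 < k)%N ->
  1 / 8 * (1 / 2) ^+ k * (1 / 2) ^+ k.-1 / n%:R ^+ (2 * k - 1)
    <= 1 / n%:R * (1 / 8 * (1 / 2) ^+ k * (b / 2) ^+ k.-1).
Proof.
move=> k_gt0; have n_neq0 : n%:R != 0 :> R by move: n_ge4R => ?; apply/eqP; lra.
have -> : (2 * k - 1 = (2 * k.-1).+1)%N by rewrite -(prednK k_gt0); lia.
rewrite exprS exprM.
have -> : 1 / 8 * (1 / 2) ^+ k * (1 / 2) ^+ k.-1 / (n%:R * (n%:R ^+ 2) ^+ k.-1)
          = 1 / n%:R * (1 / 8 * (1 / 2) ^+ k * (1 / 2 / n%:R ^+ 2) ^+ k.-1) :> R.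
  rewrite [(1 / 2 / _) ^+ _]expr_div_n.
  have : (n%:R ^+ 2) ^+ k.-1 != 0 :> R by rewrite !expf_neq0.
  move: ((n%:R ^+ 2) ^+ k.-1) ((1 / 2 : R) ^+ k) ((1 / 2 : R) ^+ k.-1) => Z X Y Z_neq0.
  by field; rewrite n_neq0 Z_neq0.
apply: (ler_wpM2l inv_n_ge0); apply: ler_wpM2l; first by rewrite mulr_ge0 ?exprn_ge0 ?divr_ge0.
apply: lerXn2r; rewrite ?nnegrE ?divr_ge0 ?exprn_ge0 ?mulr_ge0 //.
move: n_ge4R => ?; rewrite -subr_ge0 natr_subn2.
rewrite (_ : _ - _ = 1 / (n%:R * n%:R * (n%:R - 2))); first by rewrite divr_ge0 ?mulr_ge0 //; lra.
by rewrite expr2; field; apply/andP; split; apply/eqP; lra.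
Qed.

End CycleMatrix.

Unset Implicit Arguments.

Theorem claim1 (R : realFieldType) (k : nat) (hk : (2 <= k)%N) :
  exists c : R, 0 < c /\
    forall (n : nat) (H H' : {set {set 'I_n}}),
      (4 <= n)%N -> (k <= n)%N ->
      ham_cycle H -> k_exchange H H' k ->
      c / (n%:R ^+ (2 * k - 1)) <= gen_prob (PiH R H) H'.
Proof.
exists (1 / 8 * (1 / 2) ^+ k * (1 / 2) ^+ k.-1); split.
  by rewrite !mulr_gt0 ?exprn_gt0 //; lra.
move=> n H H' n_ge4 _ [p0 ->] [[p eqH'] [A [B [_ _ _ card_B eqH'AB]]]].
have k_gt0 : (0 < k)%N by apply: ltnW.
have [e eB] : exists e, e \in B by apply/set0Pn; rewrite -card_gt0 card_B.
have /imsetP[j _ e_edge] : e \in cyc_edges p by rewrite -eqH' eqH'AB inE eB orbT.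
(* Rotate p so that the unpaid closing edge of the order is the new edge e. *)
have [q [eq_q last_q]] := cyc_edges_rotate p j.
have off_in_B i : cyc_edge q i \notin cyc_edges p0 -> cyc_edge q i \in B.
  by move: (mem_cyc_edges q i); rewrite eq_q -eqH' eqH'AB !inE => /orP[/andP[_ ->]|].
have last_in_B (i : 'I_n) : i.+1 = n -> cyc_edge q i \in B.
  by move/last_q ->; rewrite /cyc_edge -e_edge.
rewrite eqH' -eq_q; apply: le_trans (order_prob_le_gen_prob (PiH_ge0 R _) q).
apply: le_trans (order_prob_PiH_ge_new_edges R n_ge4 off_in_B last_in_B); rewrite card_B.
exact: inv_pow_le_PiH_weights.
Qed.
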